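(* Let $T\in\mathcal{BC}(X)$ and $s,p\in\rho_S(T)$ with $s\notin[p]$. Write $Q_s:=\mathcal Q_{c,s}(T)^{-1}$, $Q_p:=\mathcal Q_{c,p}(T)^{-1}$ and $s_0=\Re(s)$. Then $$sQ_sQ_pp-sQ_s\bar TQ_p-Q_s\bar TQ_pp+Q_s\bar T^2Q_p$$ $$=\big[(sQ_s-pQ_p)p-\bar s(sQ_s-pQ_p)\big](p^2-2s_0p+|s|^2)^{-1}+\big[(\bar TQ_p-Q_s\bar T)p-\bar s(\bar TQ_p-Q_s\bar T)\big](p^2-2s_0p+|s|^2)^{-1}.$$
   Context: $\mathbb H$ denotes the quaternions with units $e_1,e_2,e_3$; $\bar s$ is the conjugate of $s$; $[p]=\{\Re(p)+J|\underline p|:J\in\mathbb S\}$, $\mathbb S$ the unit purely imaginary quaternions. $X=X_{\mathbb R}\otimes\mathbb H$ is a two-sided quaternionic Banach module over a real Banach space $X_{\mathbb R}$; $\mathcal{BC}(X)$ is the set of $T=T_0+T_1e_1+T_2e_2+T_3e_3$ with $T_i\in\mathcal B(X_{\mathbb R})$ pairwise commuting; $\bar T=T_0-\sum_{i=1}^3T_ie_i$; $\mathcal Q_{c,s}(T)=s^2\mathcal I-s(T+\bar T)+T\bar T$; $\rho_S(T)$ is the set of $s\in\mathbb H$ for which $\mathcal Q_{c,s}(T)$ has a bounded inverse. *)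

From HB Require Import structures.
From mathcomp Require Import all_boot all_order all_algebra.
From mathcomp Require Import all_classical all_reals all_analysis.
Set Implicit Arguments. Unset Strict Implicit. Unset Printing Implicit Defensive.
Import Order.TTheory GRing.Theory Num.Theory.
Import numFieldNormedType.Exports.
Local Open Scope ring_scope.

Record quat (R : realType) := Quat { q0 : R; q1 : R; q2 : R; q3 : R }.
Arguments Quat {R}.

Section Quaternions.
Variable R : realType.
Implicit Types a b : quat R.

Definition qreal (r : R) : quat R := Quat r 0 0 0.
Definition qadd a b := Quat (q0 a + q0 b) (q1 a + q1 b) (q2 a + q2 b) (q3 a + q3 b).
Definition qopp a := Quat (- q0 a) (- q1 a) (- q2 a) (- q3 a).
Definition qsub a b := qadd a (qopp b).
Definition qmul a b := Quat
  (q0 a * q0 b - q1 a * q1 b - q2 a * q2 b - q3 a * q3 b)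
  (q0 a * q1 b + q1 a * q0 b + q2 a * q3 b - q3 a * q2 b)
  (q0 a * q2 b - q1 a * q3 b + q2 a * q0 b + q3 a * q1 b)
  (q0 a * q3 b + q1 a * q2 b - q2 a * q1 b + q3 a * q0 b).
Definition qconj a := Quat (q0 a) (- q1 a) (- q2 a) (- q3 a).
Definition qnorm2 a := q0 a ^+ 2 + q1 a ^+ 2 + q2 a ^+ 2 + q3 a ^+ 2.
Definition qRe a := q0 a.
Definition qImnorm a := Num.sqrt (q1 a ^+ 2 + q2 a ^+ 2 + q3 a ^+ 2).
(** multiplicative inverse (s^{-1} = \bar s / |s|^2; only used for s <> 0) *)
Definition qinv a := let n := qnorm2 a in
  Quat (q0 a / n) (- q1 a / n) (- q2 a / n) (- q3 a / n).
Definition qS (J : quat R) := q0 J = 0 /\ qnorm2 J = 1.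
Definition qsphere (p q : quat R) :=
  exists J, qS J /\ q = qadd (qreal (qRe p)) (qmul J (qreal (qImnorm p))).
End Quaternions.

(** ** The two-sided quaternionic module X = X_R (x) H,
    an element (x0,x1,x2,x3) standing for x0 + x1 e1 + x2 e2 + x3 e3 *)
Section Module.
Variables (R : realType) (V : completeNormedModType R).

Definition QX := (V * V * V * V)%type.
Definition mkX (x0 x1 x2 x3 : V) : QX := (x0, x1, x2, x3).
Definition X0 (x : QX) := x.1.1.1.
Definition X1 (x : QX) := x.1.1.2.
Definition X2 (x : QX) := x.1.2.
Definition X3 (x : QX) := x.2.

(** (sum_i f_i e_i) applied to (sum_j x_j e_j) = sum_{i,j} f_i(x_j) e_i e_j *)
Definition qapply (f0 f1 f2 f3 : V -> V) (x : QX) : QX :=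
  mkX (f0 (X0 x) - f1 (X1 x) - f2 (X2 x) - f3 (X3 x))
      (f0 (X1 x) + f1 (X0 x) + f2 (X3 x) - f3 (X2 x))
      (f0 (X2 x) - f1 (X3 x) + f2 (X0 x) + f3 (X1 x))
      (f0 (X3 x) + f1 (X2 x) - f2 (X1 x) + f3 (X0 x)).

(** left scalar multiplication a x, seen as the operator a I *)
Definition lmulX (a : quat R) : QX -> QX :=
  qapply (fun v => q0 a *: v) (fun v => q1 a *: v)
         (fun v => q2 a *: v) (fun v => q3 a *: v).

Definition opadd (A B : QX -> QX) : QX -> QX := fun x => A x + B x.
Definition opsub (A B : QX -> QX) : QX -> QX := fun x => A x - B x.

Definition bounded_op (f : V -> V) :=
  continuous f /\ forall (a : R) (u v : V), f (a *: u + v) = a *: f u + f v.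

Record BC := mkBC {
  T0 : V -> V; T1 : V -> V; T2 : V -> V; T3 : V -> V;
  T0_bd : bounded_op T0; T1_bd : bounded_op T1;
  T2_bd : bounded_op T2; T3_bd : bounded_op T3;
  comm01 : T0 \o T1 = T1 \o T0; comm02 : T0 \o T2 = T2 \o T0;
  comm03 : T0 \o T3 = T3 \o T0; comm12 : T1 \o T2 = T2 \o T1;
  comm13 : T1 \o T3 = T3 \o T1; comm23 : T2 \o T3 = T3 \o T2 }.

Definition BCop (T : BC) : QX -> QX := qapply (T0 T) (T1 T) (T2 T) (T3 T).
Definition BCconj (T : BC) : QX -> QX :=
  qapply (T0 T) (fun v => - T1 T v) (fun v => - T2 T v) (fun v => - T3 T v).

Definition Qcs (T : BC) (s : quat R) : QX -> QX :=
  opadd (opsub (lmulX (qmul s s)) (lmulX s \o opadd (BCop T) (BCconj T)))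
        (BCop T \o BCconj T).

Definition bounded_inverse (A B : QX -> QX) :=
  continuous B /\ (forall (a : R) (x y : QX), B (a *: x + y) = a *: B x + B y)
  /\ (forall x, A (B x) = x) /\ (forall x, B (A x) = x).

Definition rhoS (T : BC) (s : quat R) := exists B, bounded_inverse (Qcs T s) B.
End Module.

From HB Require Import structures.
From mathcomp Require Import all_boot all_order all_algebra.
From mathcomp Require Import all_classical all_reals all_analysis.
From mathcomp Require Import ring lra.
Import Order.TTheory GRing.Theory Num.Theory.
Import numFieldNormedType.Exports.
Local Open Scope ring_scope.
Set Implicit Arguments. Unset Strict Implicit. Unset Printing Implicit Defensive.

(* The components T_i together with the real scalars lie in the bicommutant C of
   {T_0, T_1, T_2, T_3}, a commutative ring of operators on X_R.  Hence T, \bar T,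
   the scalars s, p, \bar s and Q_{c,s}(T), Q_{c,p}(T) all act on X through the
   quaternion algebra over C.  There Q_{c,s}(T) = s^2 - s (2 T_0) + T \bar T has
   central coefficients, so it commutes with s and \bar s, and Q_{c,p}(T) commutes
   with p and with p^2 - 2 s_0 p + |s|^2, which is invertible because s \notin [p].
   Composing both sides with Q_{c,s}(T) on the left and with
   (p^2 - 2 s_0 p + |s|^2) Q_{c,p}(T) on the right removes both inverses and leaves
   a polynomial identity in the quaternion algebra over C, checked componentwise. *)

(* Abelian group identities in V are proved by [ring] in the square-zero
   extension K x V, into which V embeds additively. *)
Section TrivialExtension.
Variables (K : comPzRingType) (V : lmodType K).

Definition trivext := (K * V)%type.
HB.instance Definition _ := GRing.Zmodule.on trivext.

Definition trivext_mul (x y : trivext) : trivext := (x.1 * y.1, x.1 *: y.2 + y.1 *: x.2).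

Fact trivext_mulA : associative trivext_mul.
Proof.
move=> [a u] [b v] [c w]; congr pair; rewrite /= ?mulrA //.
by rewrite !scalerDr !scalerA addrA [c * a]mulrC [c * b]mulrC [b * c]mulrC.
Qed.

Fact trivext_mulC : commutative trivext_mul.
Proof. by move=> [a u] [b v]; rewrite /trivext_mul /= mulrC addrC. Qed.

Fact trivext_mul1 : left_id (1, 0) trivext_mul.
Proof. by move=> [a u]; rewrite /trivext_mul /= mul1r scale1r scaler0 addr0. Qed.

Fact trivext_mulDl : left_distributive trivext_mul +%R.
Proof.
by move=> [a u] [b v] [c w]; rewrite /trivext_mul /= mulrDl scalerDl scalerDr addrACA.
Qed.

HB.instance Definition _ := GRing.Zmodule_isComPzRing.Build trivext
  trivext_mulA trivext_mulC trivext_mul1 trivext_mulDl.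

Definition trivext_in (v : V) : trivext := (0, v).

Fact trivext_in_is_zmod_morphism : zmod_morphism trivext_in.
Proof. by move=> u v; rewrite /trivext_in; congr pair; rewrite subr0. Qed.

HB.instance Definition _ := GRing.isZmodMorphism.Build V trivext trivext_in
  trivext_in_is_zmod_morphism.

Lemma trivext_in_inj : injective trivext_in.
Proof. by move=> u v []. Qed.
End TrivialExtension.

Ltac zmod_ring := apply: trivext_in_inj; ring.

Section Bicommutant.
Variables (R : comPzRingType) (V : lmodType R).

Record commuting_set := CommutingSet {
  cs_mem :> {linear V -> V} -> Prop;
  cs_commute : forall f g, cs_mem f -> cs_mem g -> f \o g = g \o f }.

Variable S : commuting_set.

Definition commutant (g : {linear V -> V}) := forall f, S f -> g \o f = f \o g.

Record bicommutant := Bicommutant {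
  bc_fun :> V -> V;
  bc_linear : linear bc_fun;
  bc_commute : forall g, commutant g -> bc_fun \o g = g \o bc_fun }.

HB.instance Definition _ (f : bicommutant) :=
  GRing.isLinear.Build R V V *:%R (bc_fun f) (bc_linear f).

Lemma bicommutant_ext (f g : bicommutant) : f =1 g -> f = g.
Proof.
case: f g => [f fl fc] [g gl gc] /= /funext fg; subst g.
by rewrite (Prop_irrelevance fl gl) (Prop_irrelevance fc gc).
Qed.

Lemma bc_commute_app (f : bicommutant) g : commutant g -> forall v, f (g v) = g (f v).
Proof. by move=> /(bc_commute f) fg v; have /= := congr1 (@^~ v) fg. Qed.

Lemma mem_commutant h : S h -> commutant h.
Proof. by move=> Sh k; apply: cs_commute Sh. Qed.

Lemma bicommutant_commutant (f : bicommutant) : commutant f.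
Proof. by move=> h /mem_commutant; apply: bc_commute. Qed.

Section Operations.
Variables (f g : bicommutant).

Fact bc_add_linear : linear (fun v => f v + g v).
Proof. by move=> a u v; rewrite !linearP scalerDr addrACA. Qed.
Fact bc_add_commute h : commutant h ->
  (fun v => f v + g v) \o h = h \o (fun v => f v + g v).
Proof. by move=> ch; apply: funext => v /=; rewrite !(bc_commute_app _ ch) raddfD. Qed.
Definition bc_add := Bicommutant bc_add_linear bc_add_commute.

Fact bc_opp_linear : linear (fun v => - f v).
Proof. by move=> a u v; rewrite linearP opprD scalerN. Qed.
Fact bc_opp_commute h : commutant h -> (fun v => - f v) \o h = h \o (fun v => - f v).
Proof. by move=> ch; apply: funext => v /=; rewrite (bc_commute_app _ ch) raddfN. Qed.
Definition bc_opp := Bicommutant bc_opp_linear bc_opp_commute.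

Fact bc_mul_linear : linear (f \o g).
Proof. by move=> a u v; rewrite /= !linearP. Qed.
Fact bc_mul_commute h : commutant h -> (f \o g) \o h = h \o (f \o g).
Proof. by move=> ch; apply: funext => v /=; rewrite !(bc_commute_app _ ch). Qed.
Definition bc_mul := Bicommutant bc_mul_linear bc_mul_commute.
End Operations.

Fact bc_scale_linear (r : R) : linear (fun v : V => r *: v).
Proof. by move=> a u v; rewrite scalerDr !scalerA mulrC. Qed.
Fact bc_scale_commute (r : R) h : commutant h ->
  (fun v => r *: v) \o h = h \o (fun v => r *: v).
Proof. by move=> _; apply: funext => v /=; rewrite linearZ. Qed.
Definition bc_scale r := Bicommutant (bc_scale_linear r) (bc_scale_commute r).

Fact bc_addA : associative bc_add.
Proof. by move=> f g h; apply: bicommutant_ext => v /=; rewrite addrA. Qed.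
Fact bc_addC : commutative bc_add.
Proof. by move=> f g; apply: bicommutant_ext => v /=; rewrite addrC. Qed.
Fact bc_add0 : left_id (bc_scale 0) bc_add.
Proof. by move=> f; apply: bicommutant_ext => v /=; rewrite scale0r add0r. Qed.
Fact bc_addN : left_inverse (bc_scale 0) bc_opp bc_add.
Proof. by move=> f; apply: bicommutant_ext => v /=; rewrite scale0r addNr. Qed.
HB.instance Definition _ := gen_eqMixin bicommutant.
HB.instance Definition _ := gen_choiceMixin bicommutant.
HB.instance Definition _ :=
  GRing.isZmodule.Build bicommutant bc_addA bc_addC bc_add0 bc_addN.

Fact bc_mulA : associative bc_mul.
Proof. by move=> f g h; apply: bicommutant_ext. Qed.
Fact bc_mulC : commutative bc_mul.
Proof.
by move=> f g; apply: bicommutant_ext => v /=; rewrite (bc_commute_app _ (bicommutant_commutant g)).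
Qed.
Fact bc_mul1 : left_id (bc_scale 1) bc_mul.
Proof. by move=> f; apply: bicommutant_ext => v /=; rewrite scale1r. Qed.
Fact bc_mulDl : left_distributive bc_mul bc_add.
Proof. by move=> f g h; apply: bicommutant_ext. Qed.
HB.instance Definition _ :=
  GRing.Zmodule_isComPzRing.Build bicommutant bc_mulA bc_mulC bc_mul1 bc_mulDl.

Fact bc_scale_is_zmod_morphism : zmod_morphism bc_scale.
Proof. by move=> a b; apply: bicommutant_ext => v /=; rewrite scalerBl. Qed.
Fact bc_scale_is_monoid_morphism : monoid_morphism bc_scale.
Proof. by split=> [|a b]; apply: bicommutant_ext => v /=; rewrite ?scale1r ?scalerA. Qed.
HB.instance Definition _ :=
  GRing.isZmodMorphism.Build R bicommutant bc_scale bc_scale_is_zmod_morphism.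
HB.instance Definition _ :=
  GRing.isMonoidMorphism.Build R bicommutant bc_scale bc_scale_is_monoid_morphism.

Lemma bcD (f : bicommutant) : {morph f : u v / u + v}. Proof. exact: raddfD. Qed.
Lemma bcB (f : bicommutant) : {morph f : u v / u - v}. Proof. exact: raddfB. Qed.

Definition bc_of (f : {linear V -> V}) (Sf : S f) :=
  @Bicommutant f (@linearP _ _ _ _ f) (fun g cg => esym (cg f Sf)).
End Bicommutant.

Record hquat (K : comPzRingType) := HQuat { h0 : K; h1 : K; h2 : K; h3 : K }.

Lemma hquat_ext (K : comPzRingType) (x y : hquat K) :
  h0 x = h0 y -> h1 x = h1 y -> h2 x = h2 y -> h3 x = h3 y -> x = y.
Proof. by case: x y => ? ? ? ? [? ? ? ?] /= -> -> -> ->. Qed.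

Ltac hquat_ring := apply: hquat_ext; rewrite /=; ring.

Section QuaternionAlgebra.
Variable K : comPzRingType.
Local Notation hquat := (hquat K).
Implicit Types (k : K) (t x y : hquat).

Definition hquat_add x y := HQuat (h0 x + h0 y) (h1 x + h1 y) (h2 x + h2 y) (h3 x + h3 y).
Definition hquat_opp x := HQuat (- h0 x) (- h1 x) (- h2 x) (- h3 x).
Definition hquat_mul x y := HQuat
  (h0 x * h0 y - h1 x * h1 y - h2 x * h2 y - h3 x * h3 y)
  (h0 x * h1 y + h1 x * h0 y + h2 x * h3 y - h3 x * h2 y)
  (h0 x * h2 y - h1 x * h3 y + h2 x * h0 y + h3 x * h1 y)
  (h0 x * h3 y + h1 x * h2 y - h2 x * h1 y + h3 x * h0 y).
Definition hquat_scalar k := HQuat k 0 0 0.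
Definition hquat_conj x := HQuat (h0 x) (- h1 x) (- h2 x) (- h3 x).

HB.instance Definition _ := gen_eqMixin hquat.
HB.instance Definition _ := gen_choiceMixin hquat.

Fact hquat_addA : associative hquat_add. Proof. by move=> *; hquat_ring. Qed.
Fact hquat_addC : commutative hquat_add. Proof. by move=> *; hquat_ring. Qed.
Fact hquat_add0 : left_id (hquat_scalar 0) hquat_add. Proof. by move=> *; hquat_ring. Qed.
Fact hquat_addN : left_inverse (hquat_scalar 0) hquat_opp hquat_add.
Proof. by move=> *; hquat_ring. Qed.
HB.instance Definition _ :=
  GRing.isZmodule.Build hquat hquat_addA hquat_addC hquat_add0 hquat_addN.

Fact hquat_mulA : associative hquat_mul. Proof. by move=> *; hquat_ring. Qed.
Fact hquat_mul1 : left_id (hquat_scalar 1) hquat_mul. Proof. by move=> *; hquat_ring. Qed.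
Fact hquat_mulr1 : right_id (hquat_scalar 1) hquat_mul. Proof. by move=> *; hquat_ring. Qed.
Fact hquat_mulDl : left_distributive hquat_mul +%R. Proof. by move=> *; hquat_ring. Qed.
Fact hquat_mulDr : right_distributive hquat_mul +%R. Proof. by move=> *; hquat_ring. Qed.
HB.instance Definition _ := GRing.Zmodule_isPzRing.Build hquat
  hquat_mulA hquat_mul1 hquat_mulr1 hquat_mulDl hquat_mulDr.

Lemma hquat_scalar_comm k x : GRing.comm x (hquat_scalar k).
Proof. by hquat_ring. Qed.

Lemma hquat_conj_comm x : GRing.comm x (hquat_conj x).
Proof. by hquat_ring. Qed.

Definition hquat_Qc (t x : hquat) := x * x - x * (t + hquat_conj t) + t * hquat_conj t.

Lemma hquat_Qc_comm t x y : GRing.comm x y -> GRing.comm (hquat_Qc t x) y.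
Proof.
rewrite /hquat_Qc; have -> : t + hquat_conj t = hquat_scalar (h0 t + h0 t) by hquat_ring.
have -> : t * hquat_conj t = hquat_scalar (h0 t ^+ 2 + h1 t ^+ 2 + h2 t ^+ 2 + h3 t ^+ 2).
  by hquat_ring.
move=> /commr_sym yx; apply/commr_sym/commrD; last exact: hquat_scalar_comm.
by apply: commrB; apply: commrM => //; apply: hquat_scalar_comm.
Qed.

(* The identity of the theorem, composed with Q_{c,s} on the left and with
   (p^2 - 2 s_0 p + |s|^2) Q_{c,p} on the right. *)
Lemma hquat_resolvent_identity (t s p : hquat) :
  let tb := hquat_conj t in let sb := hquat_conj s in
  let D := p * p - hquat_scalar (h0 s + h0 s) * p + s * sb in
  s * (p * D) - s * (tb * D) - tb * (p * D) + tb * tb * D =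
  s * (p * hquat_Qc t p) - hquat_Qc t s * (p * p)
  - (sb * s * hquat_Qc t p - hquat_Qc t s * (sb * p))
  + (hquat_Qc t s * (tb * p) - tb * p * hquat_Qc t p
     - (hquat_Qc t s * (sb * tb) - sb * (tb * hquat_Qc t p))).
Proof. by rewrite /hquat_Qc /hquat_conj /hquat_scalar; hquat_ring. Qed.
End QuaternionAlgebra.

Section RealQuaternions.
Variable R : realType.
Implicit Types a p s : quat R.

Lemma qnorm2_eq0 a : qnorm2 a = 0 -> a = Quat 0 0 0 0.
Proof.
case: a => a0 a1 a2 a3; rewrite /qnorm2 /= => h.
by congr Quat; apply/eqP; rewrite -sqrf_eq0; apply/eqP; nra.
Qed.

Lemma qmul_qinv a : qnorm2 a != 0 -> qmul a (qinv a) = qreal 1.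
Proof.
case: a => a0 a1 a2 a3; rewrite /qinv /qnorm2 /qmul /qreal /= => nz.
by congr Quat; field.
Qed.

Lemma qsphere_intro p s :
  qRe s = qRe p -> q1 s ^+ 2 + q2 s ^+ 2 + q3 s ^+ 2 = q1 p ^+ 2 + q2 p ^+ 2 + q3 p ^+ 2 ->
  qsphere p s.
Proof.
case: s => s0 s1 s2 s3; case: p => p0 p1 p2 p3; rewrite /qsphere /qImnorm /qRe /= => -> Im_eq.
rewrite -Im_eq; have [Im0|Im_neq0] := eqVneq (s1 ^+ 2 + s2 ^+ 2 + s3 ^+ 2) 0.
  rewrite Im0 sqrtr0; have [-> [-> ->]] : [/\ s1 = 0, s2 = 0 & s3 = 0].
    by split; apply/eqP; rewrite -sqrf_eq0; apply/eqP; nra.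
  exists (Quat 0 1 0 0); rewrite /qS /qnorm2 /qadd /qmul /qreal /=.
  by split; [split=> //; ring | congr Quat; ring].
have m_gt0 : 0 < Num.sqrt (s1 ^+ 2 + s2 ^+ 2 + s3 ^+ 2).
  by rewrite sqrtr_gt0 lt0r Im_neq0 /=; nra.
set m := Num.sqrt _ in m_gt0 *; have m2 : m ^+ 2 = s1 ^+ 2 + s2 ^+ 2 + s3 ^+ 2.
  by rewrite sqr_sqrtr //; nra.
have m_neq0 : m != 0 by rewrite gt_eqF.
exists (Quat 0 (s1 / m) (s2 / m) (s3 / m)); rewrite /qS /qnorm2 /qadd /qmul /qreal /=.
split; last by congr Quat; field.
split=> //; rewrite expr0n /= add0r !expr_div_n -!mulrDl -m2 divff //.
by rewrite expf_neq0.
Qed.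

Lemma qmul_quadratic_comm p (r t : R) :
  let d := qadd (qsub (qmul p p) (qmul (qreal r) p)) (qreal t) in
  qmul p d = qmul d p.
Proof.
by case: p => p0 p1 p2 p3; rewrite /qadd /qsub /qmul /qreal /qopp /=; congr Quat; ring.
Qed.

Lemma quadratic_root_qsphere s p :
  qadd (qsub (qmul p p) (qmul (qreal (2 * qRe s)) p)) (qreal (qnorm2 s)) = Quat 0 0 0 0 ->
  qsphere p s.
Proof.
case: s => s0 s1 s2 s3; case: p => p0 p1 p2 p3.
rewrite /qadd /qsub /qmul /qreal /qopp /qnorm2 /qRe /= => -[e0 e1 e2 e3].
have Re_eq : s0 = p0.
  apply/eqP; rewrite eq_sym -subr_eq0; apply/negPn/negP => neq.
  have [P1 [P2 P3]] : [/\ p1 = 0, p2 = 0 & p3 = 0].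
    by split; apply: (mulIf neq); rewrite mul0r; nra.
  subst p1 p2 p3.
  by move: neq; rewrite -sqrf_eq0 eq_le sqr_ge0 andbT; nra.
by apply: qsphere_intro => //=; subst s0; nra.
Qed.
End RealQuaternions.

Section QuaternionicAction.
Variables (R : realType) (V : completeNormedModType R) (T : BC V).

HB.instance Definition _ := GRing.isLinear.Build R V V *:%R (T0 T) (T0_bd T).2.
HB.instance Definition _ := GRing.isLinear.Build R V V *:%R (T1 T) (T1_bd T).2.
HB.instance Definition _ := GRing.isLinear.Build R V V *:%R (T2 T) (T2_bd T).2.
HB.instance Definition _ := GRing.isLinear.Build R V V *:%R (T3 T) (T3_bd T).2.

Definition BC_component (f : {linear V -> V}) := [\/ f = T0 T :> (V -> V),
  f = T1 T :> (V -> V), f = T2 T :> (V -> V) | f = T3 T :> (V -> V)].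

Fact BC_components_commute f g : BC_component f -> BC_component g -> f \o g = g \o f.
Proof.
by do 2![case=> ->]; rewrite ?(comm01 T, comm02 T, comm03 T, comm12 T, comm13 T, comm23 T).
Qed.

Definition BC_components := CommutingSet BC_components_commute.

Local Notation C := (bicommutant BC_components).

Definition Tquat : hquat C := HQuat
  (@bc_of _ _ BC_components (T0 T) (Or41 _ _ _ erefl))
  (@bc_of _ _ BC_components (T1 T) (Or42 _ _ _ erefl))
  (@bc_of _ _ BC_components (T2 T) (Or43 _ _ _ erefl))
  (@bc_of _ _ BC_components (T3 T) (Or44 _ _ _ erefl)).

Definition hquat_of (a : quat R) : hquat C := HQuat
  (bc_scale BC_components (q0 a)) (bc_scale BC_components (q1 a))
  (bc_scale BC_components (q2 a)) (bc_scale BC_components (q3 a)).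

Lemma hquat_ofM a b : hquat_of (qmul a b) = hquat_of a * hquat_of b.
Proof. by hquat_ring. Qed.

Lemma hquat_of_real1 : hquat_of (qreal 1) = 1.
Proof. by hquat_ring. Qed.

Lemma hquat_of_conj a : hquat_of (qconj a) = hquat_conj (hquat_of a).
Proof. by hquat_ring. Qed.

Lemma hquat_of_quadratic a b :
  hquat_of (qadd (qsub (qmul b b) (qmul (qreal (2 * qRe a)) b)) (qreal (qnorm2 a))) =
  hquat_of b * hquat_of b - hquat_scalar (h0 (hquat_of a) + h0 (hquat_of a)) * hquat_of b
  + hquat_of a * hquat_conj (hquat_of a).
Proof. by rewrite /qRe /qnorm2; hquat_ring. Qed.

Definition act (x : hquat C) : QX V -> QX V := qapply (h0 x) (h1 x) (h2 x) (h3 x).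

Lemma lmulX_act a : lmulX a = act (hquat_of a). Proof. by []. Qed.
Lemma BCop_act : BCop T = act Tquat. Proof. by []. Qed.
Lemma BCconj_act : BCconj T = act (hquat_conj Tquat). Proof. by []. Qed.

Lemma QX_ext (u w : QX V) :
  X0 u = X0 w -> X1 u = X1 w -> X2 u = X2 w -> X3 u = X3 w -> u = w.
Proof.
by case: u w => [[[? ?] ?] ?] [[[? ?] ?] ?]; rewrite /X0 /X1 /X2 /X3 /= => -> -> -> ->.
Qed.

Fact act_is_zmod_morphism x : zmod_morphism (act x).
Proof.
by move=> u w; apply: QX_ext; rewrite /act /qapply /X0 /X1 /X2 /X3 /= !bcB; zmod_ring.
Qed.
HB.instance Definition _ x :=
  GRing.isZmodMorphism.Build (QX V) (QX V) (act x) (act_is_zmod_morphism x).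

Lemma actDr x : {morph act x : u w / u + w}. Proof. exact: raddfD. Qed.
Lemma actNr x : {morph act x : u / - u}. Proof. exact: raddfN. Qed.

Lemma actDl x y u : act (x + y) u = act x u + act y u.
Proof. by apply: QX_ext; rewrite /act /qapply /X0 /X1 /X2 /X3 /=; zmod_ring. Qed.

Lemma actBl x y u : act (x - y) u = act x u - act y u.
Proof. by apply: QX_ext; rewrite /act /qapply /X0 /X1 /X2 /X3 /=; zmod_ring. Qed.

Lemma actM x y u : act (x * y) u = act x (act y u).
Proof.
by apply: QX_ext; rewrite /act /qapply /X0 /X1 /X2 /X3 /= !(bcB, bcD); zmod_ring.
Qed.

Lemma act1 u : act 1 u = u.
Proof.
by apply: QX_ext; rewrite /act /qapply /X0 /X1 /X2 /X3 /= scale1r !scale0r !(subr0, addr0).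
Qed.

Definition Qc a := hquat_Qc Tquat (hquat_of a).

Lemma Qcs_act a : Qcs T a =1 act (Qc a).
Proof.
move=> u; rewrite /Qcs /opadd /opsub /= !lmulX_act hquat_ofM BCop_act BCconj_act.
by rewrite /Qc /hquat_Qc actDl actBl !actM actDl.
Qed.

Lemma Qc_comm a b : qmul a b = qmul b a -> GRing.comm (Qc a) (hquat_of b).
Proof. by move=> ab; apply: hquat_Qc_comm; rewrite /GRing.comm -!hquat_ofM ab. Qed.

Lemma Qc_conj_comm a : GRing.comm (Qc a) (hquat_conj (hquat_of a)).
Proof. exact/hquat_Qc_comm/hquat_conj_comm. Qed.

Section BoundedInverse.
Variables (a : quat R) (B : QX V -> QX V).
Hypothesis B_inv : bounded_inverse (Qcs T a) B.

Lemma act_Qc_inv u : act (Qc a) (B u) = u.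
Proof. by rewrite -Qcs_act; case: B_inv => _ [_ []]. Qed.

Lemma inv_act_Qc u : B (act (Qc a) u) = u.
Proof. by rewrite -Qcs_act; case: B_inv => _ [_ []]. Qed.

Lemma inv_act_comm w : GRing.comm (Qc a) w -> forall u, B (act (w * Qc a) u) = act w u.
Proof. by move=> cw u; rewrite -cw actM inv_act_Qc. Qed.

Lemma act_Qc_comm_inv w :
  GRing.comm (Qc a) w -> forall u, act (Qc a) (act w (B u)) = act w u.
Proof. by move=> cw u; rewrite -actM cw actM act_Qc_inv. Qed.
End BoundedInverse.
End QuaternionicAction.

Theorem theorem6p4 (R : realType) (V : completeNormedModType R) (T : BC V)
  (s p : quat R) (Qs Qp : QX V -> QX V) :
  rhoS T s -> rhoS T p -> ~ qsphere p s ->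
  bounded_inverse (Qcs T s) Qs -> bounded_inverse (Qcs T p) Qp ->
  let Tb := BCconj T in
  let c := qinv (qadd (qsub (qmul p p) (qmul (qreal (2 * qRe s)) p))
                      (qreal (qnorm2 s))) in
  let L := @lmulX R V in
  opadd (opsub (opsub (L s \o Qs \o Qp \o L p) (L s \o Qs \o Tb \o Qp))
               (Qs \o Tb \o Qp \o L p))
        (Qs \o Tb \o Tb \o Qp)
  = opadd
      ((opsub (opsub (L s \o Qs) (L p \o Qp) \o L p)
              (L (qconj s) \o opsub (L s \o Qs) (L p \o Qp))) \o L c)
      ((opsub (opsub (Tb \o Qp) (Qs \o Tb) \o L p)
              (L (qconj s) \o opsub (Tb \o Qp) (Qs \o Tb))) \o L c).
Proof.
(* The resolvent-set hypotheses are implied by the bounded inverses. *)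
move=> _ _ not_sphere hs hp Tb; set d := qadd _ _ => c L.
have dc : qmul d c = qreal 1.
  by apply: qmul_qinv; apply/eqP => /qnorm2_eq0 /quadratic_root_qsphere.
have sS := Qc_comm T (erefl (qmul s s)).
have s'S := Qc_conj_comm T s.
have s's_S := commrM s'S sS.
have pP := Qc_comm T (erefl (qmul p p)).
have dP := Qc_comm T (qmul_quadratic_comm p (2 * qRe s) (qnorm2 s)).
have pdP := commrM pP dP.
apply: funext => y; rewrite /opadd /opsub /=.
(* Write y = (p^2 - 2 s_0 p + |s|^2) Q_{c,p}(T) v. *)
have y_eq : y = act (hquat_of T d) (L c y).
  by rewrite /L (lmulX_act T) -actM -hquat_ofM dc hquat_of_real1 act1.
move: (L c y) y_eq => z ->.
have [v ->] : exists v, z = act (Qc T p) v by exists (Qp z); rewrite (act_Qc_inv hp).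
rewrite /Tb /L !(lmulX_act T) BCconj_act hquat_of_conj -!actM !mulrA.
rewrite (inv_act_comm hp pdP) (inv_act_comm hp dP) (inv_act_comm hp pP) (inv_act_Qc hp).
rewrite -!actM !(actDr, actNr) -!actM.
apply: (can_inj (inv_act_Qc hs)); rewrite !(actDr, actNr).
rewrite !(act_Qc_comm_inv hs sS, act_Qc_comm_inv hs s'S, act_Qc_comm_inv hs s's_S).
rewrite !(act_Qc_inv hs) -!actM -!(actDl, actBl); congr (act _ v).
by rewrite hquat_of_quadratic; apply: hquat_resolvent_identity.
Qed.
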